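(* Let $\chi:T\to\overline{\mathbf F}_p^\times$ be a smooth character with $\chi\neq\chi^s$. Then $\mathrm{Hom}_P(\mathrm{Ind}_P^G\chi,\mathrm{Ind}_P^G\chi)=\mathrm{Hom}_G(\mathrm{Ind}_P^G\chi,\mathrm{Ind}_P^G\chi)$.
   Context: $F$ non-Archimedean local field of residual characteristic $p$, $G=\mathrm{GL}_2(F)$, $P$ the upper triangular Borel subgroup, $U$ its unipotent radical, $T$ the diagonal torus; characters of $T$ are viewed as characters of $P$ via $P\to P/U\cong T$. $\chi^s(\mathrm{diag}(a,d))=\chi(\mathrm{diag}(d,a))$. $\mathrm{Ind}_P^G\chi$ is the space of locally constant $f:G\to\overline{\mathbf F}_p$ with $f(bg)=\chi(b)f(g)$ for $b\in P$, with $G$ acting by right translation. *)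

From mathcomp Require Import all_boot all_order all_algebra.
Set Implicit Arguments. Unset Strict Implicit. Unset Printing Implicit Defensive.
Import Order.TTheory GRing.Theory Num.Theory.
Local Open Scope ring_scope.

(* A non-Archimedean local field of residual characteristic p: a field F
   with a discrete (normalized, surjective onto Z) valuation, complete for
   it, whose residue field O/m is finite of characteristic p.
   The valuation [nlf_val] is only meaningful on nonzero elements;
   [vge L x n] means "v(x) >= n", with v(0) = +oo. *)
Record nonarch_local_field (F : fieldType) (p : nat) := NLF {
  nlf_val : F -> int;
  nlf_valM : forall x y, x != 0 -> y != 0 -> nlf_val (x * y) = nlf_val x + nlf_val y;
  nlf_valD : forall x y, x != 0 -> y != 0 -> x + y != 0 ->
     Num.min (nlf_val x) (nlf_val y) <= nlf_val (x + y);
  nlf_unif : exists w : F, w != 0 /\ nlf_val w = 1;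
  nlf_complete : forall u : nat -> F,
     (forall n : int, exists N : nat, forall i j : nat, (N <= i)%N -> (N <= j)%N ->
          u i - u j = 0 \/ n <= nlf_val (u i - u j)) ->
     exists l : F, forall n : int, exists N : nat, forall i : nat, (N <= i)%N ->
          u i - l = 0 \/ n <= nlf_val (u i - l);
  nlf_residue_finite : exists s : seq F,
     forall x : F, (x = 0 \/ 0 <= nlf_val x) ->
       exists2 a, a \in s & (a = 0 \/ 0 <= nlf_val a) /\
                            (x - a = 0 \/ 1 <= nlf_val (x - a));
  nlf_prime : prime p;
  nlf_resid_char : (p%:R : F) = 0 \/ 1 <= nlf_val (p%:R : F)
}.

Definition vge (F : fieldType) (p : nat) (L : nonarch_local_field F p)
  (x : F) (n : int) : Prop := x = 0 \/ n <= nlf_val L x.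

Definition inG (F : fieldType) (g : 'M[F]_2) : Prop := \det g != 0.

Definition inP (F : fieldType) (b : 'M[F]_2) : Prop :=
  \det b != 0 /\ b 1 0 = 0.

(* chi a d = chi(diag(a,d)), for a, d in F^x. *)
Definition smooth_character (F : fieldType) (p : nat) (L : nonarch_local_field F p)
  (C : fieldType) (chi : F -> F -> C) : Prop :=
  (forall a d, a != 0 -> d != 0 -> chi a d != 0) /\
  (forall a d a' d', a != 0 -> d != 0 -> a' != 0 -> d' != 0 ->
      chi (a * a') (d * d') = chi a d * chi a' d') /\
  (exists n : int, forall a d, a != 0 -> d != 0 ->
      vge L (a - 1) n -> vge L (d - 1) n -> chi a d = 1).

Definition chi_s (F C : Type) (chi : F -> F -> C) : F -> F -> C :=
  fun a d => chi d a.

Definition char_eq (F : fieldType) (C : Type) (chi1 chi2 : F -> F -> C) : Prop :=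
  forall a d : F, a != 0 -> d != 0 -> chi1 a d = chi2 a d.

(* Functions on G are represented as functions on 2x2 matrices, vanishing
   off G. f is in Ind_P^G chi iff f(bg) = chi(b) f(g) for b in P, g in G,
   and f is locally constant on G. *)
Definition inInd (F : fieldType) (p : nat) (L : nonarch_local_field F p)
  (C : fieldType) (chi : F -> F -> C) (f : 'M[F]_2 -> C) : Prop :=
  (forall g, ~ inG g -> f g = 0) /\
  (forall b g, inP b -> inG g -> f (b *m g) = chi (b 0 0) (b 1 1) * f g) /\
  (forall g, inG g -> exists n : int, forall h, inG h ->
       (forall i j, vge L (h i j - g i j) n) -> f h = f g).

Definition rho (F : fieldType) (C : Type) (g : 'M[F]_2) (f : 'M[F]_2 -> C)
  : 'M[F]_2 -> C := fun x => f (x *m g).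

Definition isHom (F : fieldType) (p : nat) (L : nonarch_local_field F p)
  (C : fieldType) (chi : F -> F -> C) (H : 'M[F]_2 -> Prop)
  (phi : ('M[F]_2 -> C) -> ('M[F]_2 -> C)) : Prop :=
  (forall f, inInd L chi f -> inInd L chi (phi f)) /\
  (forall (c : C) f1 f2, inInd L chi f1 -> inInd L chi f2 ->
      phi (fun x => c * f1 x + f2 x) = (fun x => c * phi f1 x + phi f2 x)) /\
  (forall h f, H h -> inInd L chi f -> phi (rho h f) = rho h (phi f)).

(* Every P-equivariant endomorphism phi of Ind chi is multiplication by a scalar.
   Restriction to the big cell P w U identifies the functions of Ind chi vanishing at 1
   with Schwartz functions psi on F, and nu psi := phi (f_psi) (w) is a linear functional
   which the torus makes invariant under all dilations z |-> s z. In characteristic p such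
   a functional kills every psi vanishing near 0: psi is the sum of the p dilates, by the
   powers of s = 1 + upi^r, of its restriction to a fundamental domain, and these dilates
   all have the same value. Hence nu psi = psi(0) lam, and U-equivariance gives phi f = lam f
   whenever f(1) = 0. For general f, phi f - lam f transforms on the right under P by chi;
   since w diag(a,d) = diag(d,a) w and chi <> chi^s it vanishes at w, hence on the big cell,
   hence everywhere. A scalar map is G-equivariant. *)

From mathcomp Require Import all_boot all_order all_algebra.
From mathcomp Require Import boolp zify ring.
Set Implicit Arguments. Unset Strict Implicit. Unset Printing Implicit Defensive.
Import Order.TTheory GRing.Theory Num.Theory.
Local Open Scope ring_scope.

Section Valuation.
Variables (F : fieldType) (p : nat) (L : nonarch_local_field F p).
Local Notation v := (nlf_val L).
Local Notation vge := (vge L).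

Lemma val1 : v 1 = 0.
Proof.
have := nlf_valM L (oner_neq0 F) (oner_neq0 F); rewrite mulr1 => h.
by apply: (addrI (v 1)); rewrite addr0 -h.
Qed.

Lemma valN x : x != 0 -> v (- x) = v x.
Proof.
have N10 : (-1 : F) != 0 by rewrite oppr_eq0 oner_neq0.
have vN1 : v (-1) = 0 by have := nlf_valM L N10 N10; rewrite mulrNN mulr1 val1; lia.
by move=> x0; rewrite -mulN1r (nlf_valM L N10 x0) vN1 add0r.
Qed.

Lemma valV x : x != 0 -> v x^-1 = - v x.
Proof.
move=> x0; have := nlf_valM L x0 (invr_neq0 x0).
by rewrite mulfV // val1; lia.
Qed.

Lemma vgeP x n : x != 0 -> vge x n <-> n <= v x.
Proof. by move=> x0; split; [case=> [x_0|//]; rewrite x_0 eqxx in x0 | right]. Qed.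

Lemma vge_val x : vge x (v x).
Proof. by right. Qed.

Lemma vge_le m n x : m <= n -> vge x n -> vge x m.
Proof. by move=> lemn [->|h]; [left | right; apply: le_trans h]. Qed.

Lemma vgeN x n : vge (- x) n <-> vge x n.
Proof.
have imp y : vge y n -> vge (- y) n.
  case: (eqVneq y 0) => [-> _|y0]; first by rewrite oppr0; left.
  by rewrite !vgeP ?oppr_eq0 // valN.
by split=> /imp //; rewrite opprK.
Qed.

Lemma vgeD x y n : vge x n -> vge y n -> vge (x + y) n.
Proof.
case: (eqVneq x 0) => [-> _|x0]; first by rewrite add0r.
case: (eqVneq y 0) => [-> //|y0]; first by rewrite addr0.
case: (eqVneq (x + y) 0) => [-> _ _|s0]; first by left.
rewrite !vgeP // => hx hy; apply: le_trans (nlf_valD L x0 y0 s0).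
by rewrite le_min hx hy.
Qed.

Lemma vgeB x y n : vge x n -> vge y n -> vge (x - y) n.
Proof. by move=> hx /vgeN; apply: vgeD. Qed.

Lemma vgeM x y n m : vge x n -> vge y m -> vge (x * y) (n + m).
Proof.
case: (eqVneq x 0) => [-> _|x0]; first by rewrite mul0r; left.
case: (eqVneq y 0) => [-> _|y0]; first by rewrite mulr0; left.
by rewrite !vgeP ?mulf_neq0 // nlf_valM // => hx hy; rewrite lerD.
Qed.

Lemma vge_nat k : vge k%:R 0.
Proof.
elim: k => [|k IH]; first by left.
by rewrite mulrS; apply: vgeD IH; right; rewrite val1.
Qed.

Lemma vge_subC x y n : vge (x - y) n -> vge (y - x) n.
Proof. by rewrite -vgeN opprB. Qed.

Lemma vge_sub_trans y x z n : vge (x - y) n -> vge (y - z) n -> vge (x - z) n.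
Proof. by move=> hxy hyz; rewrite -(subrKA y); apply: vgeD. Qed.

Lemma vge_ltNge x n : x != 0 -> ~ vge x n -> v x < n.
Proof. by move=> x0; rewrite vgeP // ltNge => /negP. Qed.

Lemma val_near x y : x != 0 -> vge (y - x) (v x + 1) -> y != 0 /\ v y = v x.
Proof.
move=> x0 hyx.
have y0 : y != 0.
  by apply/eqP=> y_0; move: hyx; rewrite y_0 sub0r vgeN vgeP //; lia.
split=> //; case: (eqVneq (y - x) 0) => [/eqP|d0]; first by rewrite subr_eq0 => /eqP ->.
move: hyx; rewrite vgeP // => hd.
have := nlf_valD L x0 d0; rewrite addrC subrK => /(_ y0).
have Nd0 : - (y - x) != 0 by rewrite oppr_eq0.
have := nlf_valD L y0 Nd0; rewrite (valN d0) opprB addrCA subrr addr0 => /(_ x0).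
by rewrite !ge_min => /orP[] h1 /orP[] h2; lia.
Qed.

End Valuation.

Lemma seq_uniform_bound (T : eqType) (s : seq T) (P : T -> int -> Prop) :
  (forall a m m', m <= m' -> P a m -> P a m') ->
  (forall a, a \in s -> exists m, P a m) -> exists m, forall a, a \in s -> P a m.
Proof.
move=> Pmono; elim: s => [|b s IH] hs; first by exists 0.
have [mb Pb] := hs b (mem_head _ _).
have [|ms Ps] := IH; first by move=> a sa; apply: hs; rewrite in_cons sa orbT.
exists (Num.max mb ms) => a; rewrite in_cons => /orP[/eqP->|sa].
  by apply: Pmono Pb; rewrite le_max lexx.
by apply: Pmono (Ps a sa); rewrite le_max lexx orbT.
Qed.

Section Uniformizer.
Variables (F : fieldType) (p : nat) (L : nonarch_local_field F p).
Local Notation v := (nlf_val L).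
Local Notation vge := (vge L).

Lemma uniformizer_exists : exists w : F, (w != 0) && (v w == 1).
Proof. by have [w [w0 vw]] := nlf_unif L; exists w; rewrite w0 vw eqxx. Qed.

Definition upi : F := xchoose uniformizer_exists.

Lemma upi_neq0 : upi != 0.
Proof. by have /andP[] := xchooseP uniformizer_exists. Qed.

Lemma val_upi : v upi = 1.
Proof. by have /andP[_ /eqP] := xchooseP uniformizer_exists. Qed.

Lemma upiX_neq0 n : upi ^+ n != 0.
Proof. exact: expf_neq0 upi_neq0. Qed.

Lemma upiz_neq0 (k : int) : upi ^ k != 0.
Proof. exact: expfz_neq0 upi_neq0. Qed.

Lemma val_upiX n : v (upi ^+ n) = n%:Z.
Proof.
elim: n => [|n IH]; first by rewrite expr0 val1.
by rewrite exprS nlf_valM ?upi_neq0 ?upiX_neq0 // IH val_upi; lia.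
Qed.

Lemma val_upiz (k : int) : v (upi ^ k) = k.
Proof.
case: k => n /=; first exact: val_upiX.
by rewrite valV ?upiX_neq0 // val_upiX; lia.
Qed.

Lemma vge_upiz (k : int) : vge (upi ^ k) k.
Proof. by right; rewrite val_upiz. Qed.

Definition locally_constant (T : Type) (f : F -> T) :=
  forall z, exists n, forall z', vge (z' - z) n -> f z' = f z.

Section UniformLocalConstancy.
Variables (T : Type) (f : F -> T).
Hypothesis f_lc : locally_constant f.

Definition nonuniform_ball (c : F) (k : int) :=
  forall m, exists z e, [/\ vge (z - c) k, vge e m & f (z + e) <> f z].

Lemma ball_residue_split (s : seq F) c k z :
  (forall x, vge x 0 -> exists2 a, a \in s & vge a 0 /\ vge (x - a) 1) ->
  vge (z - c) k -> exists2 a, a \in s & vge a 0 /\ vge (z - (c + upi ^ k * a)) (k + 1).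
Proof.
move=> hs hz; set t := (z - c) * upi ^ (- k).
have [|a sa [a0 ta]] := hs t; first by have := vgeM hz (vge_upiz (- k)); rewrite subrr.
exists a => //; split=> //.
have -> : z - (c + upi ^ k * a) = upi ^ k * (t - a).
  rewrite /t mulrBr mulrCA -expfzDr ?upi_neq0 // subrr expr0z; ring.
exact: vgeM (vge_upiz k) ta.
Qed.

(* Finitely many residues: one of the subballs of radius k + 1 stays nonuniform. *)
Lemma nonuniform_ball_split c k :
  nonuniform_ball c k -> exists c', vge (c' - c) k /\ nonuniform_ball c' (k + 1).
Proof.
move=> bad; apply: contrapT => /forallNP good.
have [s hs] := nlf_residue_finite L.
have {}hs x : vge x 0 -> exists2 a, a \in s & vge a 0 /\ vge (x - a) 1 by exact: hs.
pose unif a m := vge a 0 -> forall z e,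
  vge (z - (c + upi ^ k * a)) (k + 1) -> vge e m -> f (z + e) = f z.
have [m hm] : exists m, forall a, a \in s -> unif a m.
  apply: seq_uniform_bound => [a m m' lemm hm a0 z e hz he|a _].
    by apply: hm => //; apply: vge_le he.
  apply: contrapT => /forallNP nonunif.
  have [a0|na0] := pselect (vge a 0); last by apply: (nonunif 0).
  apply: (good (c + upi ^ k * a)); split.
    by rewrite addrAC subrr add0r; have := vgeM (vge_upiz k) a0; rewrite addr0.
  move=> m; apply: contrapT => /forallNP hz; apply: (nonunif m) => _ z e hze he.
  by apply: contrapT => hne; apply: (hz z); exists e.
have [z [e [hz he hne]]] := bad m.
have [a sa [a0 hza]] := ball_residue_split hs hz.
exact/hne/(hm a sa a0).
Qed.

Lemma nonuniform_ball_chain c k : nonuniform_ball c k ->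
  exists u : nat -> F, forall i, vge (u i.+1 - u i) (k + i%:Z) /\ nonuniform_ball (u i) (k + i%:Z).
Proof.
move=> bad.
have /choice [next hnext] : forall ck : F * int, exists c',
    nonuniform_ball ck.1 ck.2 -> vge (c' - ck.1) ck.2 /\ nonuniform_ball c' (ck.2 + 1).
  move=> [c0 k0]; have [/nonuniform_ball_split [c' hc']|nb] := pselect (nonuniform_ball c0 k0).
    by exists c'.
  by exists c0.
pose seq_ck i := iter i (fun ck => (next ck, ck.2 + 1)) (c, k).
have seq_k i : (seq_ck i).2 = k + i%:Z by elim: i => [|i /= ->]; [rewrite addr0 | lia].
have seq_bad i : nonuniform_ball (seq_ck i).1 (k + i%:Z).
  elim: i => [|i IH]; first by rewrite addr0.
  have [_] := hnext (seq_ck i) ltac:(by rewrite seq_k).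
  by rewrite /= seq_k (_ : k + i.+1%:Z = k + i%:Z + 1) //; lia.
exists (fun i => (seq_ck i).1) => i; split=> //.
by have [] := hnext (seq_ck i) ltac:(by rewrite seq_k); rewrite seq_k.
Qed.

(* Completeness: the nested balls shrink to a point where f is locally constant. *)
Lemma nonuniform_ballN c k : ~ nonuniform_ball c k.
Proof.
move=> /nonuniform_ball_chain [u hu].
have cauchy i j : (i <= j)%N -> vge (u j - u i) (k + i%:Z).
  move=> lij; rewrite -(subnKC lij); elim: (j - i)%N => [|d IH].
    by rewrite addn0 subrr; left.
  by rewrite addnS; apply: vge_sub_trans IH; apply: vge_le (hu _).1; lia.
have [l hl] : exists l, forall n, exists i0, forall i, (i0 <= i)%N -> vge (u i - l) n.
  apply: nlf_complete => n; exists `|n - k|%N => i j hi hj.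
  by apply: vge_le (vge_sub_trans (cauchy _ _ hi) (vge_subC (cauchy _ _ hj))); lia.
have [nl fl] := f_lc l.
have [i0 hi0] := hl nl.
set i := maxn i0 `|nl - k|%N.
have [z [e [hz he hne]]] := (hu i).2 nl.
have zl : vge (z - l) nl.
  by apply: vge_sub_trans (hi0 i (leq_maxl _ _)); apply: vge_le hz; lia.
by apply: hne; rewrite (fl z zl) fl // addrAC; apply: vgeD.
Qed.

Lemma ball_uniformly_locally_constant c k :
  exists m, forall z e, vge (z - c) k -> vge e m -> f (z + e) = f z.
Proof.
have [m hm] : exists m, forall z e, ~ [/\ vge (z - c) k, vge e m & f (z + e) <> f z].
  apply: contrapT => hn; apply: (@nonuniform_ballN c k) => m.
  by apply: contrapT => hm; apply: hn; exists m => z e hze; apply: hm; exists z, e.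
by exists m => z e hz he; apply: contrapT => hne; apply: (hm z e).
Qed.

Lemma uniformly_locally_constant (c0 : T) N :
  (forall z, ~ vge z N -> f z = c0) -> exists m, forall z e, vge e m -> f (z + e) = f z.
Proof.
move=> f_out; have [m hm] := ball_uniformly_locally_constant 0 N.
exists (Num.max m N) => z e he.
have [zN|zN] := pselect (vge z N).
  by apply: hm; [rewrite subr0 | apply: vge_le he; rewrite le_max lexx].
have z0 : z != 0 by apply/eqP => z_0; apply: zN; left.
have vz := vge_ltNge z0 zN.
have [ze0 vze] : z + e != 0 /\ v (z + e) = v z.
  apply: val_near z0 _; rewrite addrAC subrr add0r; apply: vge_le he.
  by rewrite le_max; apply/orP; right; lia.
by rewrite !f_out // => /(vgeP L N ze0); rewrite vze; lia.
Qed.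

End UniformLocalConstancy.
End Uniformizer.

Section OrbitTransversal.
Variables (X : choiceType) (R : X -> X -> Prop) (D : X -> Prop) (sg : X -> X) (p : nat).
Hypothesis p_gt0 : (0 < p)%N.
Hypothesis R_refl : forall x, R x x.
Hypothesis R_sym : forall x y, R x y -> R y x.
Hypothesis R_trans : forall x y z, R x y -> R y z -> R x z.
Hypothesis R_sg : forall x y, R x y -> R (sg x) (sg y).
Hypothesis R_D : forall x y, R x y -> D x -> D y.
Hypothesis D_sg : forall x, D x -> D (sg x).
Hypothesis sg_period : forall x, D x -> R (iter p sg x) x.
Hypothesis sg_exact_period : forall x j, D x -> (0 < j < p)%N -> ~ R (iter j sg x) x.

Lemma R_iter n x y : R x y -> R (iter n sg x) (iter n sg y).
Proof. by elim: n => //= n IH /IH /R_sg. Qed.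

Lemma D_iter n x : D x -> D (iter n sg x).
Proof. by elim: n => //= n IH /IH /D_sg. Qed.

Lemma iter_R_inj x i j : D x -> (i < p)%N -> (j < p)%N ->
  R (iter j sg x) (iter i sg x) -> j = i.
Proof.
move=> Dx ip jp; wlog le_ij : i j ip jp / (i <= j)%N.
  move=> wlog hji; case: (leqP i j) => [|/ltnW] le; first exact: wlog.
  by apply/esym/wlog => //; apply: R_sym.
move=> hji; apply/eqP; rewrite eqn_leq le_ij andbT leqNgt; apply/negP => lt_ij.
apply: (sg_exact_period (D_iter i Dx) (j := j - i)); last by rewrite -iterD subnK.
by rewrite subn_gt0 lt_ij (leq_ltn_trans (leq_subr _ _) jp).
Qed.

Definition in_orbit (x y : X) := exists i, (i < p)%N /\ R y (iter i sg x).

Lemma in_orbit_sg x y : D x -> (in_orbit (sg x) y <-> in_orbit x y).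
Proof.
move=> Dx; split.
- case=> i [ip hy]; rewrite -iterSr in hy.
  case: (ltnP i.+1 p) => ip1; first by exists i.+1.
  have ei : i.+1 = p by apply/eqP; rewrite eqn_leq ip1 ip.
  by exists 0%N; split=> //=; rewrite ei in hy; exact: R_trans hy (sg_period Dx).
- case=> -[|i] [ip hy].
    exists p.-1; split; first by rewrite prednK.
    by rewrite -iterSr prednK //; apply: R_trans hy (R_sym (sg_period Dx)).
  by exists i; split; [exact: ltnW | rewrite iterSr in hy].
Qed.

Lemma in_orbit_iter n x y : D x -> (in_orbit (iter n sg x) y <-> in_orbit x y).
Proof.
move=> Dx; elim: n => [|n IH] //=.
by rewrite -IH; apply: in_orbit_sg; apply: D_iter.
Qed.

Lemma in_orbit_R x x' y : R x x' -> (in_orbit x' y <-> in_orbit x y).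
Proof.
by move=> hx; split=> -[i [ip hy]]; exists i; split=> //;
  apply: R_trans hy _; apply: R_iter => //; apply: R_sym.
Qed.

Lemma in_orbit_exists x : exists y, `[< in_orbit x y >].
Proof. by exists x; apply/asboolP; exists 0%N. Qed.

Definition orbit_rep x := xchoose (in_orbit_exists x).

Lemma in_orbit_rep x : in_orbit x (orbit_rep x).
Proof. exact/asboolP/(xchooseP (in_orbit_exists x)). Qed.

Lemma orbit_rep_eq x x' : (forall y, in_orbit x y <-> in_orbit x' y) -> orbit_rep x = orbit_rep x'.
Proof. by move=> h; apply: eq_xchoose => y; apply/asboolP/asboolP => /h. Qed.

(* Keep, in each orbit of <sg> on D modulo R, the class of a chosen representative. *)
Lemma orbit_transversal_exists : exists A : X -> bool,
  [/\ forall x y, R x y -> A x -> A y, forall x, A x -> D x &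
      forall x, D x -> exists i, [/\ (i < p)%N, A (iter i sg x) &
        forall j, (j < p)%N -> A (iter j sg x) -> j = i]].
Proof.
exists (fun x => `[< D x /\ R x (orbit_rep x) >]); split.
- move=> x y hxy /asboolP [Dx hx]; apply/asboolP; split; first exact: R_D hxy Dx.
  have -> : orbit_rep y = orbit_rep x by apply: orbit_rep_eq => z; exact: in_orbit_R hxy.
  exact: R_trans (R_sym hxy) hx.
- by move=> x /asboolP [].
- move=> x Dx; have [i [ip hri]] := in_orbit_rep x.
  have rep_iter j : orbit_rep (iter j sg x) = orbit_rep x.
    by apply: orbit_rep_eq => y; exact: in_orbit_iter.
  exists i; split=> //.
    by apply/asboolP; split; [exact: D_iter | rewrite rep_iter; exact: R_sym].
  move=> j jp /asboolP [_]; rewrite rep_iter => hjr.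
  exact: iter_R_inj Dx ip jp (R_trans hjr hri).
Qed.

End OrbitTransversal.

Section PrincipalUnit.
Variables (F : fieldType) (p : nat) (L : nonarch_local_field F p).
Local Notation v := (nlf_val L).
Local Notation vge := (vge L).
Local Notation upi := (upi L).

Lemma vge_char : vge p%:R 1.
Proof. by case: (nlf_resid_char L) => h; [left | right]. Qed.

(* From a Bezout relation u j = 1 + a p: j cannot lie in the maximal ideal. *)
Lemma natr_unit j : (0 < j < p)%N -> (j%:R : F) != 0 /\ v j%:R = 0.
Proof.
move=> /andP [j0 jp].
have cop : coprime j p.
  rewrite coprime_sym prime_coprime ?(nlf_prime L) //.
  by apply/negP => /(dvdn_leq j0); rewrite leqNgt jp.
have [a _ ha] := Bezoutl p j0; rewrite (eqP cop) in ha.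
have ej : (((1 + a * p) %/ j)%:R : F) * j%:R = 1 + a%:R * p%:R.
  by rewrite -!natrM divnK // natrD natrM.
have not_vge_j : ~ vge j%:R 1.
  move=> hj; have : vge (1 : F) 1.
    rewrite (_ : 1 = ((1 + a * p) %/ j)%:R * j%:R - a%:R * p%:R); last by rewrite ej; ring.
    apply: vgeB; first by have := vgeM (vge_nat L _) hj; rewrite add0r.
    by have := vgeM (vge_nat L a) vge_char; rewrite add0r.
  by case=> [/eqP|]; [rewrite oner_eq0 | rewrite val1].
have j0' : (j%:R : F) != 0 by apply/eqP => h; apply: not_vge_j; rewrite h; left.
split=> //; have := vge_nat L j; rewrite vgeP // => vj.
have : ~ (1 <= v j%:R) by move=> h1; apply: not_vge_j; right.
lia.
Qed.

Variable r : nat.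

Definition punit : F := 1 + upi ^+ r.

(* [near1 x y] says y / x lies in 1 + upi^(r+1) O (and x, y are both 0 otherwise). *)
Definition near1 (x y : F) : Prop :=
  (x = 0 /\ y = 0) \/ (x != 0 /\ vge (y - x) (v x + r%:Z + 1)).

Lemma near1_val x y : x != 0 -> vge (y - x) (v x + r%:Z + 1) -> y != 0 /\ v y = v x.
Proof. by move=> x0 h; apply: val_near x0 _; apply: vge_le h; lia. Qed.

Lemma near1_refl x : near1 x x.
Proof.
by case: (eqVneq x 0) => [->|x0]; [left | right; rewrite subrr; split=> //; left].
Qed.

Lemma near1_sym x y : near1 x y -> near1 y x.
Proof.
case=> [[-> ->]|[x0 h]]; first by left.
by have [y0 vy] := near1_val x0 h; right; rewrite vy; split=> //; apply: vge_subC.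
Qed.

Lemma near1_trans x y z : near1 x y -> near1 y z -> near1 x z.
Proof.
case=> [[-> ->] //|[x0 h]]; have [y0 vy] := near1_val x0 h.
case=> [[y_0 _]|[_ h']]; first by rewrite y_0 eqxx in y0.
by right; split=> //; rewrite vy in h'; exact: vge_sub_trans h' h.
Qed.

Lemma near1_neq0 x y : near1 x y -> x != 0 -> y != 0.
Proof. by case=> [[-> _]|[x0 /(near1_val x0) []]]; rewrite ?eqxx. Qed.

Lemma vge_upiX : vge (upi ^+ r) r%:Z.
Proof. by right; rewrite val_upiX. Qed.

Hypothesis r_gt0 : (0 < r)%N.

Lemma punit_unit : punit != 0 /\ v punit = 0.
Proof.
have := @val_near _ _ L 1 punit (oner_neq0 F); rewrite val1 => -[] //.
by rewrite /punit addrAC subrr add0r; apply: vge_le vge_upiX; lia.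
Qed.

Lemma punit_neq0 : punit != 0. Proof. by case: punit_unit. Qed.
Lemma val_punit : v punit = 0. Proof. by case: punit_unit. Qed.

Lemma punitX_expansion j : vge (punit ^+ j - 1 - j%:R * upi ^+ r) (r%:Z + 1).
Proof.
elim: j => [|j IH]; first by rewrite expr0 subrr mul0r subr0; left.
have -> : punit ^+ j.+1 - 1 - j.+1%:R * upi ^+ r =
    punit * (punit ^+ j - 1 - j%:R * upi ^+ r) + j%:R * (upi ^+ r * upi ^+ r).
  by rewrite /punit exprS -natr1; ring.
apply: vgeD; first by have := vgeM (vge_val L punit) IH; rewrite val_punit add0r.
have := vgeM (vge_nat L j) (vgeM vge_upiX vge_upiX); rewrite add0r.
by apply: vge_le; lia.
Qed.

Lemma near1_mull x y : near1 x y -> near1 (punit * x) (punit * y).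
Proof.
case=> [[-> ->]|[x0 h]]; first by left; rewrite mulr0.
right; split; first by rewrite mulf_neq0 ?punit_neq0.
rewrite -mulrBr nlf_valM ?punit_neq0 // val_punit add0r.
by have := vgeM (vge_val L punit) h; rewrite val_punit add0r.
Qed.

Lemma iter_punit j x : iter j (fun y => punit * y) x = punit ^+ j * x.
Proof. by elim: j => [|j /= ->]; rewrite ?expr0 ?mul1r // exprS mulrA. Qed.

Lemma near1_punit_char x : x != 0 -> near1 (punit ^+ p * x) x.
Proof.
move=> x0; apply: near1_sym; right; split=> //.
rewrite -{2}[x]mul1r -mulrBl.
have hp : vge (punit ^+ p - 1) (r%:Z + 1).
  rewrite -(subrK (p%:R * upi ^+ r) (punit ^+ p - 1)); apply: vgeD.
    exact: punitX_expansion.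
  by have := vgeM vge_char vge_upiX; rewrite addrC.
by have := vgeM hp (vge_val L x); apply: vge_le; lia.
Qed.

Lemma near1_punitN x j : x != 0 -> (0 < j < p)%N -> ~ near1 (punit ^+ j * x) x.
Proof.
move=> x0 hj /near1_sym [[x_0 _]|[_]]; first by rewrite x_0 eqxx in x0.
rewrite -{2}[x]mul1r -mulrBl.
have [j0 vj] := natr_unit hj.
set y := j%:R * upi ^+ r.
have y0 : y != 0 by rewrite mulf_neq0 ?upiX_neq0.
have vy : v y = r%:Z by rewrite nlf_valM ?upiX_neq0 // vj val_upiX add0r.
have [d0 vd] : punit ^+ j - 1 != 0 /\ v (punit ^+ j - 1) = v y.
  by apply: val_near y0 _; rewrite vy; exact: punitX_expansion.
by rewrite vgeP ?mulf_neq0 // nlf_valM // vd vy; lia.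
Qed.

Lemma punit_transversal_exists : exists A : F -> bool,
  [/\ forall x y, near1 x y -> A x -> A y, forall x, A x -> x != 0 &
      forall x, x != 0 -> exists i, [/\ (i < p)%N, A (punit ^+ i * x) &
        forall j, (j < p)%N -> A (punit ^+ j * x) -> j = i]].
Proof.
have [A [A_near1 A_neq0 A_orbit]] := @orbit_transversal_exists F near1 (fun x => x != 0)
  (fun x => punit * x) p (prime_gt0 (nlf_prime L)) near1_refl near1_sym near1_trans
  near1_mull near1_neq0 (fun x x0 => mulf_neq0 punit_neq0 x0)
  (fun x x0 => ltac:(by rewrite iter_punit; apply: near1_punit_char))
  (fun x j x0 hj => ltac:(by rewrite iter_punit; apply: near1_punitN)).
exists A; split=> // x /A_orbit [i [ip Ai uniq]]; exists i.
by split=> [//||j jp]; rewrite -iter_punit //; apply: uniq.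
Qed.

End PrincipalUnit.

Lemma ord2_cases (i : 'I_2) : i = 0 \/ i = 1.
Proof. by case: i => [[|[|n]]] //= Hi; [left | right]; apply: val_inj. Qed.

Section Matrix2.
Variable R : comNzRingType.

Definition mk2 (a b c d : R) : 'M[R]_2 :=
  \matrix_(i < 2, j < 2) if i == 0 then (if j == 0 then a else b) else (if j == 0 then c else d).

Lemma mk2_00 a b c d : mk2 a b c d 0 0 = a. Proof. by rewrite mxE. Qed.
Lemma mk2_01 a b c d : mk2 a b c d 0 1 = b. Proof. by rewrite mxE. Qed.
Lemma mk2_10 a b c d : mk2 a b c d 1 0 = c. Proof. by rewrite mxE. Qed.
Lemma mk2_11 a b c d : mk2 a b c d 1 1 = d. Proof. by rewrite mxE. Qed.
Definition mk2E := (mk2_00, mk2_01, mk2_10, mk2_11).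

Lemma mx2P (A B : 'M[R]_2) :
  A 0 0 = B 0 0 -> A 0 1 = B 0 1 -> A 1 0 = B 1 0 -> A 1 1 = B 1 1 -> A = B.
Proof.
move=> e00 e01 e10 e11; apply/matrixP => i j.
by case: (ord2_cases i) => ->; case: (ord2_cases j) => ->.
Qed.

Lemma mulmx2E (A B : 'M[R]_2) i j : (A *m B) i j = A i 0 * B 0 j + A i 1 * B 1 j.
Proof. by rewrite mxE big_ord_recl big_ord1; congr (_ + A i _ * B _ j); apply: val_inj. Qed.

Lemma det2 (A : 'M[R]_2) : \det A = A 0 0 * A 1 1 - A 0 1 * A 1 0.
Proof.
rewrite (expand_det_row _ 0) big_ord_recl big_ord1 /cofactor !det_mx11 !mxE /=.
have -> : lift (0 : 'I_2) (0 : 'I_1) = 1 by apply: val_inj.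
have -> : lift (1 : 'I_2) (0 : 'I_1) = 0 by apply: val_inj.
by rewrite expr0 expr1 mul1r; ring.
Qed.

Lemma det_mk2 a b c d : \det (mk2 a b c d) = a * d - b * c.
Proof. by rewrite det2 !mk2E. Qed.

End Matrix2.

Section Continuity.
Variables (F : fieldType) (p : nat) (L : nonarch_local_field F p).
Local Notation v := (nlf_val L).
Local Notation vge := (vge L).

Definition mx_close (n : int) (h g : 'M[F]_2) := forall i j, vge (h i j - g i j) n.

Definition continuous_at (f : 'M[F]_2 -> F) g :=
  forall n, exists k, forall h, mx_close k h g -> vge (f h - f g) n.

Lemma mx_close_le m n h g : m <= n -> mx_close n h g -> mx_close m h g.
Proof. by move=> lemn hc i j; apply: vge_le (hc i j). Qed.

Lemma mx_close_max m n h g :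
  mx_close (Num.max m n) h g -> mx_close m h g /\ mx_close n h g.
Proof. by move=> hc; split; apply: mx_close_le hc; rewrite le_max lexx ?orbT. Qed.

Lemma continuous_entry i j g : continuous_at (fun h => h i j) g.
Proof. by move=> n; exists n => h; apply. Qed.

Lemma continuous_cst c g : continuous_at (fun _ => c) g.
Proof. by move=> n; exists 0 => h _; rewrite subrr; left. Qed.

Lemma continuous_add f1 f2 g :
  continuous_at f1 g -> continuous_at f2 g -> continuous_at (fun h => f1 h + f2 h) g.
Proof.
move=> c1 c2 n; have [k1 hk1] := c1 n; have [k2 hk2] := c2 n.
exists (Num.max k1 k2) => h /mx_close_max [h1 h2].
by rewrite opprD addrACA; apply: vgeD; [apply: hk1 | apply: hk2].
Qed.

Lemma continuous_opp f g : continuous_at f g -> continuous_at (fun h => - f h) g.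
Proof. by move=> c n; have [k hk] := c n; exists k => h /hk; rewrite -opprD vgeN. Qed.

Lemma continuous_mul f1 f2 g :
  continuous_at f1 g -> continuous_at f2 g -> continuous_at (fun h => f1 h * f2 h) g.
Proof.
move=> c1 c2 n; set A := v (f1 g); set B := v (f2 g).
have [k1 hk1] := c1 (n - B); have [k2 hk2] := c2 B; have [k3 hk3] := c2 (n - A).
exists (Num.max k1 (Num.max k2 k3)) => h /mx_close_max [h1 /mx_close_max [h2 h3]].
have f2h : vge (f2 h) B by rewrite -(subrK (f2 g) (f2 h)); apply: vgeD (hk2 h h2) (vge_val L _).
have -> : f1 h * f2 h - f1 g * f2 g = (f1 h - f1 g) * f2 h + f1 g * (f2 h - f2 g) by ring.
apply: vgeD; first by apply: vge_le (vgeM (hk1 h h1) f2h); lia.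
by apply: vge_le (vgeM (vge_val L (f1 g)) (hk3 h h3)); rewrite -/A; lia.
Qed.

Lemma continuous_inv f g : f g != 0 -> continuous_at f g -> continuous_at (fun h => (f h)^-1) g.
Proof.
move=> fg0 c n; set A := v (f g).
have [k hk] := c (Num.max (A + 1) (n + A + A)).
exists k => h /hk hfh.
have near : vge (f h - f g) (A + 1) by apply: vge_le hfh; rewrite le_max lexx.
have close : vge (f g - f h) (n + A + A).
  by apply: vge_subC; apply: vge_le hfh; rewrite le_max lexx orbT.
have [fh0 vfh] := val_near fg0 near.
have -> : (f h)^-1 - (f g)^-1 = (f g - f h) * (f h)^-1 * (f g)^-1.
  by field; rewrite fh0 fg0.
have fhV : vge (f h)^-1 (- A) by right; rewrite valV // vfh.
have fgV : vge (f g)^-1 (- A) by right; rewrite valV.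
by apply: vge_le (vgeM (vgeM close fhV) fgV); lia.
Qed.

Lemma continuous_div f1 f2 g : f2 g != 0 ->
  continuous_at f1 g -> continuous_at f2 g -> continuous_at (fun h => f1 h / f2 h) g.
Proof. by move=> f2g0 c1 c2; apply: continuous_mul c1 (continuous_inv f2g0 c2). Qed.

Lemma continuous_det g : continuous_at (fun h => \det h) g.
Proof.
move=> n; have [k hk] := continuous_add (continuous_mul (continuous_entry 0 0 g)
  (continuous_entry 1 1 g)) (continuous_opp (continuous_mul (continuous_entry 0 1 g)
  (continuous_entry 1 0 g))) n.
by exists k => h /hk; rewrite !det2.
Qed.

Lemma continuous_neq0_near f g : f g != 0 -> continuous_at f g ->
  exists k, forall h, mx_close k h g -> f h != 0.
Proof.
move=> fg0 c; have [k hk] := c (v (f g) + 1).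
by exists k => h /hk /(val_near fg0) [].
Qed.

Variables (C : fieldType) (chi : F -> F -> C).

Definition locally_constant_at (f : 'M[F]_2 -> C) g :=
  exists n, forall h, inG h -> mx_close n h g -> f h = f g.

Lemma locally_constant_at_eq f f' g :
  (exists k, forall h, inG h -> mx_close k h g -> f h = f' h) ->
  f g = f' g -> locally_constant_at f' g -> locally_constant_at f g.
Proof.
move=> [k hk] eg [n hn]; exists (Num.max k n) => h hG /mx_close_max [h1 h2].
by rewrite hk // eg hn.
Qed.

Lemma locally_constant_at_op2 (op : C -> C -> C) f1 f2 g :
  locally_constant_at f1 g -> locally_constant_at f2 g ->
  locally_constant_at (fun h => op (f1 h) (f2 h)) g.
Proof.
move=> [n1 h1] [n2 h2]; exists (Num.max n1 n2) => h hG /mx_close_max [c1 c2].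
by rewrite h1 // h2.
Qed.

Lemma locally_constant_at_comp (psi : F -> C) e g : continuous_at e g ->
  (exists n, forall z, vge (z - e g) n -> psi z = psi (e g)) ->
  locally_constant_at (fun h => psi (e h)) g.
Proof. by move=> ce [n hn]; have [k hk] := ce n; exists k => h _ /hk /hn. Qed.

Hypothesis chi_smooth : smooth_character L chi.

Lemma chi_neq0 a d : a != 0 -> d != 0 -> chi a d != 0.
Proof. by case: chi_smooth => h _; apply: h. Qed.

Lemma chiM a d a' d' : a != 0 -> d != 0 -> a' != 0 -> d' != 0 ->
  chi (a * a') (d * d') = chi a d * chi a' d'.
Proof. by case: chi_smooth => _ [h _]; apply: h. Qed.

(* chi is trivial on 1 + upi^n O, and e1 / e1 g, e2 / e2 g eventually land there. *)
Lemma locally_constant_at_chi e1 e2 g : continuous_at e1 g -> continuous_at e2 g ->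
  e1 g != 0 -> e2 g != 0 -> locally_constant_at (fun h => chi (e1 h) (e2 h)) g.
Proof.
move=> c1 c2 e1g0 e2g0; have [_ [_ [n0 chi_ker]]] := chi_smooth.
pose r1 h := e1 h / e1 g; pose r2 h := e2 h / e2 g.
have [k1 hk1] := continuous_div e1g0 c1 (continuous_cst (e1 g) g) (Num.max n0 1).
have [k2 hk2] := continuous_div e2g0 c2 (continuous_cst (e2 g) g) (Num.max n0 1).
exists (Num.max k1 k2) => h hG /mx_close_max [/hk1 a1 /hk2 a2].
rewrite mulfV // in a1; rewrite mulfV // in a2.
have unit_neq0 y : vge (y - 1) (Num.max n0 1) -> y != 0.
  move=> /(vge_le (_ : v 1 + 1 <= _)) hy.
  by have [] := val_near (oner_neq0 F) (hy ltac:(by rewrite val1 add0r le_max lexx orbT)).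
have r1h0 := unit_neq0 _ a1; have r2h0 := unit_neq0 _ a2.
have e1h : e1 h = e1 g * r1 h by rewrite /r1 mulrCA mulfV // mulr1.
have e2h : e2 h = e2 g * r2 h by rewrite /r2 mulrCA mulfV // mulr1.
rewrite e1h e2h chiM // (chi_ker (r1 h) (r2 h)) ?mulr1 //.
  by apply: vge_le a1; rewrite le_max lexx.
by apply: vge_le a2; rewrite le_max lexx.
Qed.

End Continuity.

Section InducedRepresentation.
Variables (p : nat) (F : fieldType) (L : nonarch_local_field F p).
Variables (C : fieldType) (chi : F -> F -> C).
Hypothesis chi_smooth : smooth_character L chi.
Local Notation v := (nlf_val L).
Local Notation vge := (vge L).
Local Notation Ind := (inInd L chi).
Local Notation mx_close := (mx_close L).

Lemma inInd_lin (c : C) f1 f2 : Ind f1 -> Ind f2 -> Ind (fun x => c * f1 x + f2 x).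
Proof.
move=> [z1 [e1 l1]] [z2 [e2 l2]]; split; [|split].
- by move=> g hg; rewrite z1 // z2 // mulr0 addr0.
- by move=> b g hb hg; rewrite e1 // e2 //; ring.
- move=> g hg; exact: (locally_constant_at_op2 (fun a b => c * a + b) (l1 g hg) (l2 g hg)).
Qed.

Lemma inInd0 : Ind (fun _ => 0).
Proof. by split; [|split] => // [b g _ _|g _]; [rewrite mulr0 | exists 0]. Qed.

Lemma inG1 : inG (1%:M : 'M[F]_2).
Proof. by rewrite /inG det1 oner_neq0. Qed.

Lemma inG_mul (x h : 'M[F]_2) : inG x -> inG h -> inG (x *m h).
Proof. by rewrite /inG det_mulmx; apply: mulf_neq0. Qed.

Lemma inG_mulKl (x h : 'M[F]_2) : inG h -> inG (x *m h) -> inG x.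
Proof. by rewrite /inG det_mulmx => _; rewrite mulf_eq0 negb_or => /andP []. Qed.

Lemma inP_inG (b : 'M[F]_2) : inP b -> inG b.
Proof. by case. Qed.

Lemma mx_entries_bounded (h : 'M[F]_2) : exists a, forall i j, vge (h i j) a.
Proof.
exists (Num.min (Num.min (v (h 0 0)) (v (h 0 1))) (Num.min (v (h 1 0)) (v (h 1 1)))) => i j.
by case: (ord2_cases i) => ->; case: (ord2_cases j) => ->; apply: vge_le (vge_val L _);
  rewrite !ge_min lexx ?orbT.
Qed.

Lemma mx_close_mulr k a (x x' h : 'M[F]_2) : (forall i j, vge (h i j) a) ->
  mx_close k x' x -> mx_close (k + a) (x' *m h) (x *m h).
Proof.
move=> ha hc i j; rewrite !mulmx2E opprD addrACA -!mulrBl.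
by apply: vgeD; apply: vgeM.
Qed.

Lemma inInd_rho h f : inG h -> Ind f -> Ind (rho h f).
Proof.
move=> hG [f0 [fP flc]]; split; [|split].
- by move=> g hg; rewrite /rho f0 // => /(inG_mulKl hG).
- by move=> b g hb hg; rewrite /rho -mulmxA fP //; apply: inG_mul.
- move=> g hg; have [n hn] := flc _ (inG_mul hg hG).
  have [a ha] := mx_entries_bounded h.
  exists (n - a) => x hx hc; apply: hn; first exact: inG_mul.
  by have := mx_close_mulr ha hc; rewrite subrK.
Qed.

Lemma inInd_P f (b : 'M[F]_2) : Ind f -> inP b -> f b = chi (b 0 0) (b 1 1) * f 1%:M.
Proof. by move=> [_ [fP _]] hb; rewrite -{1}(mulmx1 b) fP //; apply: inG1. Qed.

(* [wu z] is w u(z), with w the antidiagonal Weyl element and u(z) upper unipotent. *)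
Definition wu (z : F) : 'M[F]_2 := mk2 0 1 1 z.

Lemma inG_wu z : inG (wu z).
Proof. by rewrite /inG det_mk2 mul0r mul1r sub0r oppr_eq0 oner_neq0. Qed.

(* Bruhat decomposition of the big cell. *)
Lemma mulmx_bigcell (x : 'M[F]_2) : x 1 0 != 0 ->
  mk2 (- \det x / x 1 0) (x 0 0) 0 (x 1 0) *m wu (x 1 1 / x 1 0) = x.
Proof.
by move=> x10; apply: mx2P; rewrite !mulmx2E /wu !mk2E ?det2; field.
Qed.

Lemma inInd_bigcell f x : Ind f -> inG x -> x 1 0 != 0 ->
  f x = chi (- \det x / x 1 0) (x 1 0) * f (wu (x 1 1 / x 1 0)).
Proof.
move=> [_ [fP _]] hx x10; rewrite -{1}(mulmx_bigcell x10) fP ?mk2E //; last exact: inG_wu.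
split; last by rewrite mk2_10.
by rewrite /inG det_mk2 mulr0 subr0 !mulf_neq0 ?invr_eq0 ?oppr_eq0.
Qed.

Definition schwartz (psi : F -> C) :=
  locally_constant L psi /\ exists N, forall z, ~ vge z N -> psi z = 0.

(* The element of Ind chi supported on the big cell P w U with f (w u(z)) = psi z. *)
Definition bigcell_ext (psi : F -> C) (x : 'M[F]_2) : C :=
  if (x 1 0 != 0) && (\det x != 0) then chi (- \det x / x 1 0) (x 1 0) * psi (x 1 1 / x 1 0)
  else 0.

Lemma bigcell_extP psi b g : inP b -> inG g ->
  bigcell_ext psi (b *m g) = chi (b 0 0) (b 1 1) * bigcell_ext psi g.
Proof.
move=> [hb b10] hg; rewrite /bigcell_ext.
have e10 : (b *m g) 1 0 = b 1 1 * g 1 0 by rewrite mulmx2E b10 mul0r add0r.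
have e11 : (b *m g) 1 1 = b 1 1 * g 1 1 by rewrite mulmx2E b10 mul0r add0r.
have eb : \det b = b 0 0 * b 1 1 by rewrite det2 b10 mulr0 subr0.
have /andP [b00 b11] : (b 0 0 != 0) && (b 1 1 != 0) by rewrite -negb_or -mulf_eq0 -eb.
have hbg : \det b * \det g != 0 by rewrite mulf_neq0.
have hg' : \det g != 0 := hg.
rewrite e10 e11 det_mulmx hbg hg' !andbT mulf_eq0 negb_or b11 /=.
case: ifP => g10; last by rewrite mulr0.
have gd : - \det g / g 1 0 != 0 by rewrite mulf_neq0 ?invr_eq0 ?oppr_eq0 //; exact: hg.
rewrite mulrA -(chiM chi_smooth) // eb.
by congr (chi _ _ * psi _); field; rewrite g10.
Qed.

Lemma bigcell_ext_lc_offcell psi g : schwartz psi -> inG g -> g 1 0 = 0 ->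
  locally_constant_at L (bigcell_ext psi) g.
Proof.
move=> [_ [N psi_out]] hg g10.
have g11 : g 1 1 != 0.
  by move: hg; rewrite /inG det2 g10 mulr0 subr0 mulf_eq0 negb_or => /andP [].
exists (Num.max (v (g 1 1) + 1) (v (g 1 1) - N + 1)) => h _ /mx_close_max [c1 c2].
rewrite /bigcell_ext g10 eqxx /=; case: ifP => // /andP [h10 _].
have [h11 vh11] := val_near g11 (c1 1 1).
have := c2 1 0; rewrite g10 subr0 vgeP // => vh10.
rewrite psi_out ?mulr0 // vgeP ?mulf_neq0 ?invr_eq0 // nlf_valM ?invr_eq0 //.
by rewrite valV // vh11; lia.
Qed.

Lemma bigcell_ext_lc_cell psi g : schwartz psi -> inG g -> g 1 0 != 0 ->
  locally_constant_at L (bigcell_ext psi) g.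
Proof.
move=> [psi_lc _] hg g10.
have c10 := continuous_entry L 1 0 g.
have [k1 hk1] := continuous_neq0_near g10 c10.
apply: (locally_constant_at_eq (f' := fun h => chi (- \det h / h 1 0) (h 1 0) * psi (h 1 1 / h 1 0))).
- by exists k1 => h hh /hk1 h10; rewrite /bigcell_ext h10 hh.
- by rewrite /bigcell_ext g10 hg.
apply: (locally_constant_at_op2 ( *%R)).
  apply: locally_constant_at_chi => //; last by rewrite mulf_neq0 ?invr_eq0 ?oppr_eq0.
  exact/continuous_div/c10/continuous_opp/continuous_det.
apply: locally_constant_at_comp (psi_lc _).
exact/continuous_div/c10/continuous_entry.
Qed.

Lemma inInd_bigcell_ext psi : schwartz psi -> Ind (bigcell_ext psi).
Proof.
move=> hpsi; split; [|split].
- by move=> g hg; rewrite /bigcell_ext; case: ifP => // /andP [_ h]; case: hg.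
- exact: bigcell_extP.
- move=> g hg; case: (eqVneq (g 1 0) 0) => g10.
    exact: bigcell_ext_lc_offcell.
  exact: bigcell_ext_lc_cell.
Qed.

Definition lowu (y : F) : 'M[F]_2 := mk2 1 0 y 1.

Lemma inG_lowu y : inG (lowu y).
Proof. by rewrite /inG det_mk2 mulr1 mul0r subr0 oner_neq0. Qed.

Lemma mx_close_lowu n y : vge y n -> mx_close n (lowu y) 1%:M.
Proof.
move=> hy i j; rewrite /lowu !mxE.
by case: (ord2_cases i) => ->; case: (ord2_cases j) => -> /=; rewrite ?subrr ?subr0 //; left.
Qed.

Lemma mx_close_wu n z z' : vge (z' - z) n -> mx_close n (wu z') (wu z).
Proof.
move=> hz i j; rewrite /wu !mxE.
by case: (ord2_cases i) => ->; case: (ord2_cases j) => -> /=; rewrite ?subrr //; left.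
Qed.

(* Near 1, f is evaluated on lowu (1/z) = (element of P) * wu z with |z| large. *)
Lemma schwartz_restr_wu g : Ind g -> g 1%:M = 0 -> schwartz (fun z => g (wu z)).
Proof.
move=> hg g1; have [_ [_ glc]] := hg; split.
  move=> z; have [n hn] := glc _ (inG_wu z).
  by exists n => z' hz; apply: hn; [exact: inG_wu | exact: mx_close_wu].
have [n hn] := glc _ inG1; exists (- n) => z hz.
have z0 : z != 0 by apply/eqP => z_0; apply: hz; rewrite z_0; left.
have hzV : vge z^-1 n by right; rewrite valV //; have := vge_ltNge z0 hz; lia.
have := hn _ (inG_lowu _) (mx_close_lowu hzV).
rewrite g1 (inInd_bigcell hg (inG_lowu _)) /lowu !mk2E ?invr_eq0 //.
rewrite det_mk2 mulr1 mul0r subr0 div1r invrK => /eqP.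
rewrite mulf_eq0 (negbTE (chi_neq0 chi_smooth _ _)) ?invr_eq0 // => [/eqP //|].
by rewrite mulN1r oppr_eq0.
Qed.

Lemma bigcell_ext_restr_wu g : Ind g -> g 1%:M = 0 -> g = bigcell_ext (fun z => g (wu z)).
Proof.
move=> hg g1; apply: funext => x; rewrite /bigcell_ext.
have [g0 _] := hg.
case: (boolP (\det x != 0)) => hx; last by rewrite andbF g0 //; apply/negP.
rewrite andbT; case: ifP => [x10|/negbFE/eqP x10]; first exact: inInd_bigcell.
by rewrite (inInd_P hg (conj hx x10)) g1 mulr0.
Qed.

Lemma bigcell_ext_lin (c : C) (psi1 psi2 : F -> C) :
  bigcell_ext (fun z => c * psi1 z + psi2 z) = fun x => c * bigcell_ext psi1 x + bigcell_ext psi2 x.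
Proof.
by apply: funext => x; rewrite /bigcell_ext; case: ifP => _; [ring | rewrite mulr0 addr0].
Qed.

Lemma schwartz_lin (c : C) (psi1 psi2 : F -> C) :
  schwartz psi1 -> schwartz psi2 -> schwartz (fun z => c * psi1 z + psi2 z).
Proof.
move=> [l1 [N1 s1]] [l2 [N2 s2]]; split.
  move=> z; have [n1 h1] := l1 z; have [n2 h2] := l2 z.
  exists (Num.max n1 n2) => z' hz.
  by rewrite h1 ?h2 //; apply: vge_le hz; rewrite le_max lexx ?orbT.
exists (Num.min N1 N2) => z hz.
by rewrite s1 ?s2 ?mulr0 ?addr0 // => h; apply: hz; apply: vge_le h; rewrite ge_min lexx ?orbT.
Qed.

Lemma schwartz_dil (psi : F -> C) (s : F) : s != 0 -> schwartz psi -> schwartz (fun z => psi (s * z)).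
Proof.
move=> s0 [psi_lc [N psi_out]]; split.
  move=> z; have [n h] := psi_lc (s * z).
  exists (n - v s) => z' hz; apply: h.
  by rewrite -mulrBr; apply: vge_le (vgeM (vge_val L s) hz); lia.
exists (N - v s) => z hz; apply: psi_out => h.
have z0 : z != 0 by apply/eqP => z_0; apply: hz; rewrite z_0; left.
by move: h; rewrite vgeP ?mulf_neq0 // nlf_valM // => h; apply: hz; rewrite vgeP //; lia.
Qed.

Definition indic_ball (n : int) (z : F) : C := if `[< vge z n >] then 1 else 0.

Lemma schwartz_indic_ball n : schwartz (indic_ball n).
Proof.
split; last by exists n => z hz; rewrite /indic_ball; case: asboolP.
move=> z; case: (pselect (vge z n)) => hz.
  exists n => z' hz'; rewrite /indic_ball.
  have hz'' : vge z' n by rewrite -(subrK z z'); apply: vgeD.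
  by case: asboolP => //; case: asboolP.
have z0 : z != 0 by apply/eqP => z_0; apply: hz; rewrite z_0; left.
exists (v z + 1) => z' hz'; have [z'0 vz'] := val_near z0 hz'.
rewrite /indic_ball; congr (if _ then _ else _); apply: asbool_equiv_eq.
by rewrite !vgeP // vz'.
Qed.

Definition diag2 (a d : F) : 'M[F]_2 := mk2 a 0 0 d.

Definition upu (z : F) : 'M[F]_2 := mk2 1 z 0 1.

Lemma inP_diag2 a d : a != 0 -> d != 0 -> inP (diag2 a d).
Proof. by move=> a0 d0; split; rewrite ?mk2_10 // /inG det_mk2 mulr0 subr0 mulf_neq0. Qed.

Lemma inP_upu z : inP (upu z).
Proof. by split; rewrite ?mk2_10 // /inG det_mk2 mulr0 subr0 mulr1 oner_neq0. Qed.

Lemma wu0_diag2 a d : wu 0 *m diag2 a d = diag2 d a *m wu 0.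
Proof. by apply: mx2P; rewrite !mulmx2E /wu /diag2 !mk2E; ring. Qed.

Lemma wu0_upu z : wu 0 *m upu z = wu z.
Proof. by apply: mx2P; rewrite !mulmx2E /wu /upu !mk2E; ring. Qed.

Lemma rho_diag2_bigcell_ext (psi : F -> C) s : s != 0 ->
  rho (diag2 1 s) (bigcell_ext psi) = fun x => chi s 1 * bigcell_ext (fun z => psi (s * z)) x.
Proof.
move=> s0; apply: funext => x; rewrite /rho /bigcell_ext det_mulmx det_mk2 !mulmx2E /diag2 !mk2E.
rewrite !(mulr0, mul0r, mulr1, mul1r, addr0, add0r, subr0) mulf_eq0 (negbTE s0) orbF.
case: ifP => [/andP [x10 xd]|_]; last by rewrite mulr0.
rewrite mulrA -(chiM chi_smooth) ?oner_neq0 ?mulf_neq0 ?invr_eq0 ?oppr_eq0 //.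
by congr (chi _ _ * psi _); [field | rewrite mul1r | field]; rewrite ?x10.
Qed.

(* Left P-equivariance propagates vanishing from w U to the big cell, and
   local constancy at 1 from the lower unipotents (inside the big cell) to P. *)
Lemma inInd_eq0_bigcell f : Ind f -> (forall z, f (wu z) = 0) -> forall x, f x = 0.
Proof.
move=> hf fw; have [f0 [_ flc]] := hf.
have f_cell x : inG x -> x 1 0 != 0 -> f x = 0.
  by move=> hx x10; rewrite (inInd_bigcell hf hx x10) fw mulr0.
have f1 : f 1%:M = 0.
  have [n hn] := flc _ inG1; set y := upi L ^+ `|n|%N.
  have hy : vge y n by right; rewrite val_upiX; lia.
  rewrite -(hn _ (inG_lowu y) (mx_close_lowu hy)); apply: f_cell; first exact: inG_lowu.
  by rewrite mk2_10 upiX_neq0.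
move=> x; case: (pselect (inG x)) => hx; last exact: f0.
case: (eqVneq (x 1 0) 0) => x10; last exact: f_cell.
by rewrite (inInd_P hf (conj hx x10)) f1 mulr0.
Qed.

End InducedRepresentation.

Section DilationInvariantFunctional.
Variables (p : nat) (F : fieldType) (L : nonarch_local_field F p) (C : fieldType).
Local Notation v := (nlf_val L).
Local Notation vge := (vge L).
Local Notation schwartz := (@schwartz p F L C).
Local Notation punit := (punit L).

Lemma schwartz0 : schwartz (fun _ => 0).
Proof. by split; [move=> z; exists 0 | exists 0]. Qed.

Lemma schwartz_sum (I : Type) (r : seq I) (psis : I -> F -> C) :
  (forall i, schwartz (psis i)) -> schwartz (fun z => \sum_(i <- r) psis i z).
Proof.
move=> h; elim: r => [|i r IH].
  by rewrite (_ : (fun _ => _) = fun _ => 0); [exact: schwartz0 | apply: funext => z; rewrite big_nil].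
rewrite (_ : (fun _ => _) = fun z => 1 * psis i z + \sum_(j <- r) psis j z).
  exact: schwartz_lin.
by apply: funext => z; rewrite big_cons mul1r.
Qed.

(* Uniform local constancy makes psi invariant under 1 + upi^r O for r large. *)
Lemma schwartz_punit_invariant psi : schwartz psi ->
  exists2 r, (0 < r)%N & forall j z, psi (punit r ^+ j * z) = psi z.
Proof.
move=> [psi_lc [N psi_out]]; have [m hm] := uniformly_locally_constant psi_lc psi_out.
set r := `|m - N|.+1; have r_gt0 : (0 < r)%N by [].
have punit_inv z : psi (punit r * z) = psi z.
  case: (pselect (vge z N)) => hz.
    rewrite /punit mulrDl mul1r hm //.
    by apply: vge_le (vgeM (vge_upiX L r) hz); rewrite /r; lia.
  have z0 : z != 0 by apply/eqP => z_0; apply: hz; rewrite z_0; left.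
  rewrite !psi_out // vgeP ?mulf_neq0 ?punit_neq0 // nlf_valM ?punit_neq0 //.
  by rewrite val_punit // add0r => /(vgeP L N z0).
exists r => // j z; elim: j => [|j IH]; first by rewrite expr0 mul1r.
by rewrite exprS -mulrA punit_inv.
Qed.

Lemma schwartz_restr_saturated (A : F -> bool) r psi n0 :
  (forall x y, near1 L r x y -> A x -> A y) -> ~~ A 0 ->
  schwartz psi -> (forall z, vge z n0 -> psi z = 0) ->
  schwartz (fun z => if A z then psi z else 0).
Proof.
move=> A_sat A0 [psi_lc [N psi_out]] psi0; split; last first.
  by exists N => z hz; rewrite psi_out //; case: ifP.
move=> z; case: (eqVneq z 0) => [->|z0].
  by exists n0 => z' hz'; rewrite (negbTE A0) psi0 ?if_same // -(subr0 z').
have [n hn] := psi_lc z.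
exists (Num.max n (v z + r%:Z + 1)) => z' hz'.
have zz' : near1 L r z z' by right; split=> //; apply: vge_le hz'; rewrite le_max lexx orbT.
have -> : A z' = A z by apply/idP/idP; [apply: A_sat (near1_sym zz') | apply: A_sat zz'].
by rewrite hn //; apply: vge_le hz'; rewrite le_max lexx.
Qed.

Hypothesis char_C : (p%:R : C) = 0.
Variable nu : (F -> C) -> C.
Hypothesis nu_lin : forall c psi1 psi2, schwartz psi1 -> schwartz psi2 ->
  nu (fun z => c * psi1 z + psi2 z) = c * nu psi1 + nu psi2.
Hypothesis nu_dil : forall psi s, s != 0 -> schwartz psi -> nu (fun z => psi (s * z)) = nu psi.

Lemma nu0 : nu (fun _ => 0) = 0.
Proof.
have e : (fun _ : F => 0 : C) = (fun z => 1 * 0 + 0) by apply: funext => z; rewrite mul1r addr0.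
have := nu_lin 1 schwartz0 schwartz0; rewrite -e mul1r.
by move/(congr1 (fun t => t - nu (fun _ => 0))); rewrite subrr addrK => /esym.
Qed.

Lemma nu_sum (I : Type) (r : seq I) (psis : I -> F -> C) : (forall i, schwartz (psis i)) ->
  nu (fun z => \sum_(i <- r) psis i z) = \sum_(i <- r) nu (psis i).
Proof.
move=> h; elim: r => [|i r IH].
  by rewrite big_nil -[RHS]nu0; congr nu; apply: funext => z; rewrite big_nil.
rewrite big_cons -IH -[nu (psis i)]mul1r -nu_lin //; last exact: schwartz_sum.
by congr nu; apply: funext => z; rewrite big_cons mul1r.
Qed.

(* psi is the sum of the p dilates of its restriction to a transversal of the
   orbits of multiplication by 1 + upi^r; dilation invariance makes them equal. *)
Lemma nu_vanish_near0 psi n0 : schwartz psi -> (forall z, vge z n0 -> psi z = 0) -> nu psi = 0.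
Proof.
move=> hpsi psi0; have [r r_gt0 psi_inv] := schwartz_punit_invariant hpsi.
have [A [A_sat A_neq0 A_orbit]] := punit_transversal_exists L r_gt0.
have A0 : ~~ A 0 by apply/negP => /A_neq0; rewrite eqxx.
set k := fun z => if A z then psi z else 0.
have hk : schwartz k := schwartz_restr_saturated A_sat A0 hpsi psi0.
have punitX0 j : punit r ^+ j != 0 by apply: expf_neq0; apply: punit_neq0.
have psi_dec z : psi z = \sum_(j < p) k (punit r ^+ j * z).
  case: (eqVneq z 0) => [->|z0].
    by rewrite psi0 ?big1 // => [j _|]; [rewrite mulr0 /k (negbTE A0) | left].
  have [i [ip Ai A_uniq]] := A_orbit z z0.
  rewrite (bigD1 (Ordinal ip)) //= big1 ?addr0; first by rewrite /k Ai psi_inv.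
  move=> j /eqP ji; rewrite /k; case: ifP => // /(A_uniq _ (ltn_ord j)) ji'.
  by case: ji; apply: val_inj.
rewrite (_ : psi = fun z => \sum_(j < p) k (punit r ^+ j * z)); last exact: funext.
rewrite nu_sum => [|j]; last exact: schwartz_dil.
under eq_bigr => j _ do rewrite nu_dil //.
by rewrite sumr_const card_ord -mulr_natr char_C mulr0.
Qed.

Lemma indic_ball_dil n z : indic_ball L C n z = indic_ball L C 0 (upi L ^ (- n) * z).
Proof.
rewrite /indic_ball; congr (if _ then _ else _); apply: asbool_equiv_eq.
case: (eqVneq z 0) => [->|z0]; first by rewrite mulr0; split=> _; left.
by rewrite !vgeP ?mulf_neq0 ?upiz_neq0 // nlf_valM ?upiz_neq0 // val_upiz; lia.
Qed.

(* Subtract psi 0 times the indicator of a ball on which psi is constant: the rest vanishes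
   near 0, and all balls around 0 are dilates of each other. *)
Lemma nu_dirac psi : schwartz psi -> nu psi = psi 0 * nu (indic_ball L C 0).
Proof.
move=> hpsi; have [n0 hn0] := hpsi.1 0.
set psi' := fun z => - psi 0 * indic_ball L C n0 z + psi z.
have hpsi' : schwartz psi' := schwartz_lin _ (schwartz_indic_ball L C n0) hpsi.
have psi'0 z : vge z n0 -> psi' z = 0.
  by move=> hz; rewrite /psi' /indic_ball; case: asboolP => [_|/(_ hz) //]; rewrite (hn0 z) ?subr0 // mulr1 addNr.
rewrite {1}(_ : psi = fun z => psi 0 * indic_ball L C n0 z + psi' z); last first.
  by apply: funext => z; rewrite /psi'; ring.
rewrite nu_lin ?(nu_vanish_near0 hpsi' psi'0) ?addr0 //; last exact: schwartz_indic_ball.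
congr (_ * _); rewrite -(nu_dil (upiz_neq0 L (- n0)) (schwartz_indic_ball L C 0)).
by congr nu; apply: funext => z; rewrite indic_ball_dil.
Qed.

End DilationInvariantFunctional.

Section EquivariantEndomorphism.
Variables (p : nat) (F : fieldType) (L : nonarch_local_field F p).
Variables (C : fieldType) (chi : F -> F -> C).
Hypothesis chi_smooth : smooth_character L chi.
Local Notation Ind := (inInd L chi).
Local Notation bigcell_ext := (bigcell_ext chi).
Local Notation schwartz := (@schwartz p F L C).

Variable phi : ('M[F]_2 -> C) -> ('M[F]_2 -> C).
Hypothesis phi_Ind : forall f, Ind f -> Ind (phi f).
Hypothesis phi_lin : forall (c : C) f1 f2, Ind f1 -> Ind f2 ->
  phi (fun x => c * f1 x + f2 x) = (fun x => c * phi f1 x + phi f2 x).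
Hypothesis phi_P : forall b f, inP b -> Ind f -> phi (rho b f) = rho b (phi f).

Lemma phi0 : phi (fun _ => 0) = fun _ => 0.
Proof.
have e : (fun x : 'M[F]_2 => 1 * 0 + 0 : C) = (fun _ => 0).
  by apply: funext => x; rewrite mul1r addr0.
have := phi_lin 1 (inInd0 L chi) (inInd0 L chi); rewrite e => e'.
apply: funext => x; have := congr1 (fun k => k x) e'.
by rewrite /= mul1r -{1}[phi _ x]addr0 => /addrI /esym.
Qed.

Lemma phi_scale (c : C) f : Ind f -> phi (fun x => c * f x) = fun x => c * phi f x.
Proof.
move=> hf; have := phi_lin c hf (inInd0 L chi); rewrite phi0.
under [in phi _]eq_fun => x do rewrite addr0.
by under [in RHS]eq_fun => x do rewrite addr0.
Qed.

Definition nu (psi : F -> C) : C := phi (bigcell_ext psi) (wu 0).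

Lemma nu_lin (c : C) psi1 psi2 : schwartz psi1 -> schwartz psi2 ->
  nu (fun z => c * psi1 z + psi2 z) = c * nu psi1 + nu psi2.
Proof.
by move=> h1 h2; rewrite /nu bigcell_ext_lin phi_lin //; apply: inInd_bigcell_ext.
Qed.

(* The torus element diag(1, s) normalizes w U and acts on it by z |-> s z. *)
Lemma nu_dil psi s : s != 0 -> schwartz psi -> nu (fun z => psi (s * z)) = nu psi.
Proof.
move=> s0 hpsi; have hG := inInd_bigcell_ext chi_smooth hpsi.
have hGs := inInd_bigcell_ext chi_smooth (schwartz_dil s0 hpsi).
have := phi_P (inP_diag2 (oner_neq0 F) s0) hG.
rewrite (rho_diag2_bigcell_ext chi_smooth) // phi_scale // => /(congr1 (fun k => k (wu 0))).
rewrite /rho wu0_diag2 (proj1 (proj2 (phi_Ind hG)) _ _ (inP_diag2 s0 (oner_neq0 F)) (inG_wu 0)).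
by rewrite /diag2 !mk2E => /(mulfI (chi_neq0 chi_smooth s0 (oner_neq0 F))).
Qed.

Hypothesis char_C : (p%:R : C) = 0.

Definition lam : C := nu (indic_ball L C 0).

Lemma phi_kernel_wu0 g : Ind g -> g 1%:M = 0 -> phi g (wu 0) = lam * g (wu 0).
Proof.
move=> hg g1; rewrite {1}(bigcell_ext_restr_wu hg g1) mulrC.
exact: (nu_dirac char_C nu_lin nu_dil (schwartz_restr_wu chi_smooth hg g1)).
Qed.

Lemma phi_kernel g : Ind g -> g 1%:M = 0 -> phi g = fun x => lam * g x.
Proof.
move=> hg g1; have phi_wu z : phi g (wu z) = lam * g (wu z).
  have hu := inP_upu z; have hgu := inInd_rho (inP_inG hu) hg.
  have gu1 : rho (upu z) g 1%:M = 0 by rewrite /rho mul1mx (inInd_P hg hu) g1 mulr0.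
  by have := phi_kernel_wu0 hgu gu1; rewrite phi_P // /rho wu0_upu.
have hInd := inInd_lin (- lam) hg (phi_Ind hg).
have := inInd_eq0_bigcell hInd (fun z => ltac:(by rewrite /= phi_wu mulNr addNr)).
move=> h0; apply: funext => x; apply/eqP.
by rewrite -subr_eq0 addrC -mulNr; apply/eqP; exact: h0.
Qed.

Definition phi_defect f x := - lam * f x + phi f x.

Lemma inInd_phi_defect f : Ind f -> Ind (phi_defect f).
Proof. by move=> hf; apply: inInd_lin hf (phi_Ind hf). Qed.

(* Apply phi_kernel to rho b f - chi(b) f, which vanishes at 1. *)
Lemma phi_defect_rightP f b x : Ind f -> inP b ->
  phi_defect f (x *m b) = chi (b 0 0) (b 1 1) * phi_defect f x.
Proof.
move=> hf hb; set c := chi (b 0 0) (b 1 1).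
have hfb := inInd_rho (inP_inG hb) hf.
have g1 : - c * f 1%:M + rho b f 1%:M = 0 by rewrite /rho mul1mx (inInd_P hf hb) mulNr addNr.
have := phi_kernel (inInd_lin (- c) hf hfb) g1; rewrite phi_lin // phi_P //.
move=> /(congr1 (fun k => k x)); rewrite /rho /phi_defect => e.
have -> : phi f (x *m b) = lam * (- c * f x + f (x *m b)) + c * phi f x by rewrite -e; ring.
by ring.
Qed.

Hypothesis chi_ne_chis : ~ char_eq chi (chi_s chi).

(* w diag(a, d) = diag(d, a) w forces chi(a, d) = chi(d, a) unless the defect vanishes at w. *)
Lemma phi_defect_wu0 f : Ind f -> phi_defect f (wu 0) = 0.
Proof.
move=> hf; have [a [d [a0 d0 ne]]] : exists a d, [/\ a != 0, d != 0 & chi a d != chi d a].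
  apply: contrapT => hn; apply: chi_ne_chis => a d a0 d0; apply: contrapT => ne.
  by apply: hn; exists a, d; split=> //; apply/eqP.
have := phi_defect_rightP (wu 0) hf (inP_diag2 a0 d0).
rewrite wu0_diag2 (proj1 (proj2 (inInd_phi_defect hf)) _ _ (inP_diag2 d0 a0) (inG_wu 0)).
rewrite /diag2 !mk2E => /eqP; rewrite -subr_eq0 -mulrBl mulf_eq0 subr_eq0 eq_sym (negbTE ne).
by move=> /eqP.
Qed.

Lemma phi_scalar f : Ind f -> phi f = fun x => lam * f x.
Proof.
move=> hf; have hwu z : phi_defect f (wu z) = 0.
  by rewrite -wu0_upu (phi_defect_rightP _ hf (inP_upu z)) (phi_defect_wu0 hf) mulr0.
have h0 := inInd_eq0_bigcell (inInd_phi_defect hf) hwu.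
apply: funext => x; apply/eqP.
by rewrite -subr_eq0 addrC -mulNr; apply/eqP; exact: h0.
Qed.

End EquivariantEndomorphism.

Theorem corollary5p3 (p : nat) (F : fieldType) (L : nonarch_local_field F p)
  (C : closedFieldType) (hCchar : p \in [pchar C])
  (hCalg : forall x : C, exists n : nat, (0 < n)%N /\ x ^+ (p ^ n) = x)
  (chi : F -> F -> C) (hchi : smooth_character L chi)
  (hs : ~ char_eq chi (chi_s chi))
  (phi : ('M[F]_2 -> C) -> ('M[F]_2 -> C)) :
  isHom L chi (@inP F) phi <-> isHom L chi (@inG F) phi.
Proof.
split=> [[phi_Ind [phi_lin phi_P]]|[phi_Ind [phi_lin phi_G]]]; do 2!split=> //.
  have phi_lam := phi_scalar hchi phi_Ind phi_lin phi_P (pcharf0 hCchar) hs.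
  by move=> g f hg hf; rewrite phi_lam ?phi_lam //; apply: inInd_rho.
by move=> b f hb hf; apply: phi_G (inP_inG hb) hf.
Qed.
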